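(* Let $U$ be a subgroup of $\mathbf{T}/\{\pm1\}$ with at least three elements. Then $R(U)$ is a subring of $\mathbb{C}$ (closed under addition, negation and multiplication, and containing $0$ and $1$). Moreover, $R(U)$ is exactly the set of finite $\mathbb{Z}$-linear combinations of finite products of complex numbers of the form $$\frac{1-u^2}{1-v^2},$$ where $u,v\in\mathbf{T}$ are representatives of elements of $U$ and $v^2\neq 1$. (The value $u^2$ does not depend on the choice of representative.) Equivalently, setting $V=\{u^2: u\in\mathbf{T} \text{ represents an element of } U\}\subset\mathbf{T}$, $R(U)$ is the set of finite $\mathbb{Z}$-linear combinations of finite products of numbers $\frac{1-a}{1-b}$ with $a,b\in V$, $b\neq 1$.
   Context: Let $\mathbf{T}=\{z\in\mathbb{C}:|z|=1\}$. An angle is an element of the quotient group $\mathbf{T}/\{\pm1\}$; in formulas an angle is represented by either of its two representatives $u\in\mathbf{T}$. For $p\in\mathbb{C}$ and an angle $u$, let $L_u(p)=\{p+ru: r\in\mathbb{R}\}$ (the line through $p$ with direction $u$). For distinct angles $u,v$ and $p,q\in\mathbb{C}$, $I_{u,v}(p,q)$ denotes the unique point of $L_u(p)\cap L_v(q)$. For a subgroup $U$ of $\mathbf{T}/\{\pm1\}$, $R(U)$ denotes the smallest subset of $\mathbb{C}$ that contains $0$ and $1$ and such that $I_{u,v}(p,q)\in R(U)$ whenever $p,q\in R(U)$ and $u,v$ are distinct elements of $U$. *)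

From Stdlib Require Import Reals.
Open Scope R_scope.

Record Cx := mkC { Re : R; Im : R }.

Definition C0 : Cx := mkC 0 0.
Definition C1 : Cx := mkC 1 0.
Definition Cadd (z w : Cx) : Cx := mkC (Re z + Re w) (Im z + Im w).
Definition Copp (z : Cx) : Cx := mkC (- Re z) (- Im z).
Definition Csub (z w : Cx) : Cx := Cadd z (Copp w).
Definition Cmul (z w : Cx) : Cx :=
  mkC (Re z * Re w - Im z * Im w) (Re z * Im w + Im z * Re w).
Definition Cinv (z : Cx) : Cx :=
  let n := Re z * Re z + Im z * Im z in mkC (Re z / n) (- Im z / n).
Definition Cdiv (z w : Cx) : Cx := Cmul z (Cinv w).
Definition RtoC (r : R) : Cx := mkC r 0.
Definition Cconj (z : Cx) : Cx := mkC (Re z) (- Im z).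

Definition on_T (z : Cx) : Prop := Re z * Re z + Im z * Im z = 1.

(* A subgroup of T/{+-1}, represented by its full preimage in T:
   a set of unit complex numbers containing 1 and -1, closed under
   products and inverses (inverse on T = conjugate). *)
Definition angle_subgroup (U : Cx -> Prop) : Prop :=
  (forall u, U u -> on_T u) /\
  U C1 /\
  U (Copp C1) /\
  (forall u v, U u -> U v -> U (Cmul u v)) /\
  (forall u, U u -> U (Cconj u)).

Definition distinct_angles (u v : Cx) : Prop := u <> v /\ u <> Copp v.

Definition at_least_three_angles (U : Cx -> Prop) : Prop :=
  exists u1 u2 u3, U u1 /\ U u2 /\ U u3 /\
    distinct_angles u1 u2 /\ distinct_angles u1 u3 /\ distinct_angles u2 u3.

Definition on_line (u p z : Cx) : Prop := exists r : R, z = Cadd p (Cmul (RtoC r) u).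

Inductive RU (U : Cx -> Prop) : Cx -> Prop :=
  | RU_0 : RU U C0
  | RU_1 : RU U C1
  | RU_I : forall p q u v z, RU U p -> RU U q -> U u -> U v ->
      distinct_angles u v -> on_line u p z -> on_line v q z -> RU U z.

Definition generator (U : Cx -> Prop) (z : Cx) : Prop :=
  exists u v, U u /\ U v /\ Cmul v v <> C1 /\
    z = Cdiv (Csub C1 (Cmul u u)) (Csub C1 (Cmul v v)).

Inductive gen_prod (U : Cx -> Prop) : Cx -> Prop :=
  | gp_one : gen_prod U C1
  | gp_mul : forall x g, gen_prod U x -> generator U g -> gen_prod U (Cmul x g).

Inductive Zspan_prod (U : Cx -> Prop) : Cx -> Prop :=
  | zs_zero : Zspan_prod U C0
  | zs_add : forall x p, Zspan_prod U x -> gen_prod U p -> Zspan_prod U (Cadd x p)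
  | zs_sub : forall x p, Zspan_prod U x -> gen_prod U p -> Zspan_prod U (Csub x p).

(* Writing a = u^2, b = v^2, the point z of L_u(p) /\ L_v(q) is characterised by
   z - p = a conj(z - p) and z - q = b conj(z - q), which solve to
   z = p + a ((p - q) - b conj(p - q)) / (b - a).
   Every product p of generators satisfies conj p = p / k for a square k, so the
   Z-span of these products contains the squares and all (w - a conj w) / (c - d);
   hence it is closed under intersections and contains R(U).
   Conversely, using a third direction, translations along an axis can be built from
   parallelograms, so R(U) is an additive group. The generator (1 - a) / (1 - b) is the
   intersection of the line through 1 in direction sqrt a with the line through 0 in
   direction sqrt (a / b), and multiplying by an element l with conj l = l / k maps lines
   with directions in U to lines with directions in U; so R(U) is stable under
   multiplication by products of generators and contains their Z-span. *)

From Stdlib Require Import Reals Lra Field Classical.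

Lemma Cx_eq (z w : Cx) : Re z = Re w -> Im z = Im w -> z = w.
Proof. destruct z, w; simpl; intros; subst; reflexivity. Qed.

Ltac cx_componentwise :=
  intros; repeat match goal with z : Cx |- _ => destruct z end;
  apply Cx_eq; simpl; ring.

Lemma Cring : ring_theory C0 C1 Cadd Cmul Csub Copp (@eq Cx).
Proof. constructor; cx_componentwise. Qed.

Lemma Cinv_l (z : Cx) : z <> C0 -> Cmul (Cinv z) z = C1.
Proof.
  destruct z as [x y]; intro Hz.
  assert (Hn : x * x + y * y <> 0).
  { intro Hn; apply Hz.
    assert (x = 0) by nra; assert (y = 0) by nra; subst; reflexivity. }
  apply Cx_eq; unfold Cinv, Cmul; simpl; field; exact Hn.
Qed.

Lemma Cfield : field_theory C0 C1 Cadd Cmul Csub Copp Cdiv Cinv (@eq Cx).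
Proof.
  constructor; [exact Cring | | reflexivity | exact Cinv_l].
  intro H; injection H; lra.
Qed.

Add Field Cfield_inst : Cfield.

Declare Scope cx_scope.
Delimit Scope cx_scope with cx.
Infix "+" := Cadd : cx_scope.
Infix "*" := Cmul : cx_scope.
Infix "-" := Csub : cx_scope.
Notation "- x" := (Copp x) : cx_scope.
Infix "/" := Cdiv : cx_scope.
Notation "/ x" := (Cinv x) : cx_scope.
Notation "z ^*" := (Cconj z) (at level 2, left associativity, format "z ^*") : cx_scope.
Local Open Scope cx_scope.

Lemma Cmul_integral x y : x * y = C0 -> x = C0 \/ y = C0.
Proof.
  intro H; destruct (classic (x = C0)) as [|Hx]; [now left | right].
  replace y with (/ x * (x * y)) by (field; exact Hx).
  rewrite H; ring.
Qed.

Lemma Csub_neq0 x y : x <> y -> x - y <> C0.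
Proof.
  intros H E; apply H.
  replace x with ((x - y) + y) by ring; rewrite E; ring.
Qed.

#[local] Hint Resolve Csub_neq0 not_eq_sym : core.

Ltac cx_field := field; repeat split; auto.

Lemma Cconj_add x y : (x + y)^* = x^* + y^*. Proof. cx_componentwise. Qed.
Lemma Cconj_sub x y : (x - y)^* = x^* - y^*. Proof. cx_componentwise. Qed.
Lemma Cconj_opp x : (- x)^* = - x^*. Proof. cx_componentwise. Qed.
Lemma Cconj_mul x y : (x * y)^* = x^* * y^*. Proof. cx_componentwise. Qed.
Lemma Cconj_C0 : C0^* = C0. Proof. cx_componentwise. Qed.
Lemma Cconj_C1 : C1^* = C1. Proof. cx_componentwise. Qed.
Lemma Cconj_conj x : x^*^* = x. Proof. cx_componentwise. Qed.
Lemma Cconj_inv x : (/ x)^* = / x^*.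
Proof.
  destruct x as [a b]; apply Cx_eq; unfold Cinv, Cconj; simpl;
    replace (a * a + - b * - b)%R with (a * a + b * b)%R by ring;
    unfold Rdiv; ring.
Qed.
Lemma Cconj_div x y : (x / y)^* = x^* / y^*.
Proof. unfold Cdiv; rewrite Cconj_mul, Cconj_inv; reflexivity. Qed.

Hint Rewrite Cconj_add Cconj_sub Cconj_opp Cconj_mul Cconj_C0 Cconj_C1
  Cconj_conj Cconj_inv Cconj_div : cconj.

Lemma real_RtoC t : t^* = t -> t = RtoC (Re t).
Proof.
  destruct t as [a b]; unfold Cconj, RtoC; simpl; intro H; injection H; intro.
  apply Cx_eq; simpl; lra.
Qed.

Lemma on_T_neq0 u : on_T u -> u <> C0.
Proof. unfold on_T; intros H E; subst; simpl in H; lra. Qed.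

Lemma on_T_conj u : on_T u -> u^* = / u.
Proof.
  unfold on_T; destruct u as [a b]; simpl; intro H.
  apply Cx_eq; unfold Cinv; simpl; rewrite H; field.
Qed.

(* For [u] on [T], [on_axis (u * u) x] says that [x] lies on the line through
   [0] with direction [u]: [x / u] is then real. *)
Definition on_axis (a x : Cx) : Prop := x = a * x^*.

Lemma on_axisD a x y : on_axis a x -> on_axis a y -> on_axis a (x + y).
Proof. unfold on_axis; intros Hx Hy; autorewrite with cconj; rewrite Hx, Hy at 1; ring. Qed.

Lemma on_axisN a x : on_axis a x -> on_axis a (- x).
Proof. unfold on_axis; intro Hx; autorewrite with cconj; rewrite Hx at 1; ring. Qed.

Lemma on_axisM a b x y : on_axis a x -> on_axis b y -> on_axis (a * b) (x * y).
Proof. unfold on_axis; intros Hx Hy; autorewrite with cconj; rewrite Hx, Hy at 1; ring. Qed.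

Ltac on_axis_as x := match goal with |- on_axis _ ?e => replace e with x by ring end.

Lemma on_axis_conj a x : a <> C0 -> on_axis a x -> x^* = x / a.
Proof. unfold on_axis; intros Ha Hx; rewrite Hx at 2; field; exact Ha. Qed.

Lemma on_line_iff u p z : on_T u -> on_line u p z <-> on_axis (u * u) (z - p).
Proof.
  intro Hu; pose proof (on_T_neq0 _ Hu) as Hu0; unfold on_axis; split.
  - intros [r ->]; autorewrite with cconj; rewrite (on_T_conj _ Hu).
    replace (RtoC r)^* with (RtoC r) by cx_componentwise.
    field; exact Hu0.
  - intro Hz; set (t := (z - p) * u^*).
    assert (Ht : t^* = t).
    { assert (Hu2 : u * u <> C0) by (intro E; destruct (Cmul_integral _ _ E); auto).
      unfold t; rewrite Cconj_mul, Cconj_conj, (on_axis_conj _ _ Hu2 Hz), (on_T_conj _ Hu).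
      field; exact Hu0. }
    exists (Re t); rewrite <- (real_RtoC _ Ht); unfold t; rewrite (on_T_conj _ Hu).
    field; exact Hu0.
Qed.

Lemma distinct_angles_sq u v : distinct_angles u v <-> u * u <> v * v.
Proof.
  split.
  - intros [Huv Huv'] E.
    assert (F : (u - v) * (u + v) = C0).
    { transitivity (u * u - v * v); [ring | rewrite E; ring]. }
    destruct (Cmul_integral _ _ F) as [G | G]; [apply Huv | apply Huv'];
      [ replace u with ((u - v) + v) by ring
      | replace u with ((u + v) - v) by ring ]; rewrite G; ring.
  - intro H; split; intros ->; apply H; ring.
Qed.

Definition squares (U : Cx -> Prop) (a : Cx) : Prop := exists u, U u /\ a = u * u.

Section Angles.

Variable U : Cx -> Prop.
Hypothesis HU : angle_subgroup U.

Lemma U_on_T u : U u -> on_T u. Proof. apply HU. Qed.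
Lemma U_1 : U C1. Proof. apply HU. Qed.
Lemma U_mul u v : U u -> U v -> U (u * v). Proof. apply HU. Qed.
Lemma U_conj u : U u -> U u^*. Proof. apply HU. Qed.

Lemma squares_neq0 a : squares U a -> a <> C0.
Proof.
  intros [u [Hu ->]] E.
  destruct (Cmul_integral _ _ E); apply (on_T_neq0 u); auto using U_on_T.
Qed.

Lemma squares_conj a : squares U a -> a^* = / a.
Proof.
  intros [u [Hu ->]]; pose proof (on_T_neq0 _ (U_on_T _ Hu)).
  rewrite Cconj_mul, (on_T_conj _ (U_on_T _ Hu)); cx_field.
Qed.

Lemma squares1 : squares U C1.
Proof. exists C1; split; [exact U_1 | ring]. Qed.

Lemma squaresM a b : squares U a -> squares U b -> squares U (a * b).
Proof. intros [u [Hu ->]] [v [Hv ->]]; exists (u * v); split; [auto using U_mul | ring]. Qed.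

Lemma squaresV a : squares U a -> squares U (/ a).
Proof.
  intros [u [Hu ->]].
  exists u^*; split; [auto using U_conj|].
  rewrite <- Cconj_mul, <- squares_conj by (exists u; auto); reflexivity.
Qed.

#[local] Hint Resolve squares_neq0 squares1 squaresM squaresV : core.

Lemma generator_of_squares a b :
  squares U a -> squares U b -> b <> C1 -> generator U ((C1 - a) / (C1 - b)).
Proof. intros [u [Hu ->]] [v [Hv ->]] Hb; exists u, v; auto. Qed.

Lemma generator_squares g : generator U g ->
  exists a b, squares U a /\ squares U b /\ b <> C1 /\ g = (C1 - a) / (C1 - b).
Proof.
  intros (u & v & Hu & Hv & Hb & ->).
  exists (u * u), (v * v); repeat split; auto; [exists u | exists v]; auto.
Qed.

(* [conj ((1 - a) / (1 - b)) = (b / a) ((1 - a) / (1 - b))] on the unit circle. *)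
Lemma generator_on_axis g : generator U g -> exists k, squares U k /\ on_axis k g.
Proof.
  intro Hg; destruct (generator_squares _ Hg) as (a & b & Ha & Hb & Hb1 & ->).
  exists (a / b); split; [unfold Cdiv; auto|].
  unfold on_axis; autorewrite with cconj; rewrite !squares_conj by auto.
  cx_field.
Qed.

Lemma RU_meet a b p q z : squares U a -> squares U b -> a <> b ->
  RU U p -> RU U q -> on_axis a (z - p) -> on_axis b (z - q) -> RU U z.
Proof.
  intros [u [Hu ->]] [v [Hv ->]] Hab Hp Hq Hzp Hzq.
  apply (RU_I U p q u v z Hp Hq Hu Hv); [now apply distinct_angles_sq|..];
    apply on_line_iff; auto using U_on_T.
Qed.

Section Axes.

Variables a b : Cx.
Hypotheses (Ha : squares U a) (Hb : squares U b) (Hab : a <> b).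

Let Ha0 := squares_neq0 _ Ha.
Let Ca := squares_conj _ Ha.
Let Cb := squares_conj _ Hb.

(* [x = proj a b x + proj b a x] splits [x] along the axes [a] and [b]. *)
Definition proj x := a * (x - b * x^*) / (a - b).

Lemma proj_on_axis x : on_axis a (proj x).
Proof. unfold on_axis, proj; autorewrite with cconj; rewrite Ca, Cb; cx_field. Qed.

Lemma proj_compl_on_axis x : on_axis b (proj x - x).
Proof. unfold on_axis, proj; autorewrite with cconj; rewrite Ca, Cb; cx_field. Qed.

Lemma RU_proj x : RU U x -> RU U (proj x).
Proof.
  intro Hx; apply (RU_meet a b C0 x); auto using RU_0, proj_compl_on_axis.
  replace (proj x - C0) with (proj x) by ring; apply proj_on_axis.
Qed.

Lemma RU_add_cross_axes r t : on_axis a r -> on_axis b t -> RU U r -> RU U t -> RU U (r + t).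
Proof.
  intros Hr Ht HRr HRt; apply (RU_meet b a r t); auto;
    [ replace (r + t - r) with t by ring | replace (r + t - t) with r by ring ]; auto.
Qed.

Variable c : Cx.
Hypotheses (Hc : squares U c) (Hac : a <> c) (Hbc : b <> c).

Let Cc := squares_conj _ Hc.

(* The parallel projection of the axis [a] onto the axis [c] along the direction [b]. *)
Definition shift x := x * (c * (a - b) / (a * (c - b))).

Lemma shift_on_axis s : on_axis a s -> on_axis c (shift s).
Proof.
  intro Hs; unfold on_axis, shift; autorewrite with cconj.
  rewrite (on_axis_conj _ _ Ha0 Hs), Ca, Cb, Cc; cx_field.
Qed.

Lemma shift_compl_on_axis s : on_axis a s -> on_axis b (shift s - s).
Proof.
  intro Hs; unfold on_axis, shift; autorewrite with cconj.
  rewrite (on_axis_conj _ _ Ha0 Hs), Ca, Cb, Cc; cx_field.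
Qed.

Lemma RU_axis_add s s' : on_axis a s -> on_axis a s' -> RU U s -> RU U s' -> RU U (s + s').
Proof.
  intros Hs Hs' HRs HRs'.
  assert (R1 : RU U (shift s')).
  { apply (RU_meet c b C0 s'); auto using RU_0.
    - on_axis_as (shift s'); auto using shift_on_axis.
    - auto using shift_compl_on_axis. }
  assert (R2 : RU U (s + shift s')).
  { apply (RU_meet c a s (shift s')); auto.
    - on_axis_as (shift s'); auto using shift_on_axis.
    - on_axis_as s; auto. }
  apply (RU_meet b a (s + shift s') C0); auto using RU_0.
  - on_axis_as (- (shift s' - s')); auto using on_axisN, shift_compl_on_axis.
  - on_axis_as (s + s'); auto using on_axisD.
Qed.

Lemma RU_axis_opp s : on_axis a s -> RU U s -> RU U (- s).
Proof.
  intros Hs HRs.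
  assert (R1 : RU U (s - shift s)).
  { apply (RU_meet b c C0 s); auto using RU_0.
    - on_axis_as (- (shift s - s)); auto using on_axisN, shift_compl_on_axis.
    - on_axis_as (- shift s); auto using on_axisN, shift_on_axis. }
  assert (R2 : RU U (- shift s)).
  { apply (RU_meet c a C0 (s - shift s)); auto using RU_0.
    - on_axis_as (- shift s); auto using on_axisN, shift_on_axis.
    - on_axis_as (- s); auto using on_axisN. }
  apply (RU_meet b a (- shift s) C0); auto using RU_0.
  - on_axis_as (shift s - s); auto using shift_compl_on_axis.
  - on_axis_as (- s); auto using on_axisN.
Qed.

End Axes.

Lemma RU_add_of_squares a b c x y :
  squares U a -> squares U b -> squares U c -> a <> b -> a <> c -> b <> c ->
  RU U x -> RU U y -> RU U (x + y).
Proof.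
  intros Ha Hb Hc Hab Hac Hbc Hx Hy.
  replace (x + y) with ((proj a b x + proj a b y) + (proj b a x + proj b a y)).
  2:{ unfold proj; cx_field. }
  apply (RU_add_cross_axes a b); auto using on_axisD, proj_on_axis.
  - apply (RU_axis_add a b Ha Hb Hab c); auto using proj_on_axis, RU_proj.
  - apply (RU_axis_add b a Hb Ha (not_eq_sym Hab) c); auto using proj_on_axis, RU_proj.
Qed.

Lemma RU_opp_of_squares a b c x :
  squares U a -> squares U b -> squares U c -> a <> b -> a <> c -> b <> c ->
  RU U x -> RU U (- x).
Proof.
  intros Ha Hb Hc Hab Hac Hbc Hx.
  replace (- x) with (- proj a b x + - proj b a x) by (unfold proj; cx_field).
  apply (RU_add_cross_axes a b); auto using on_axisN, proj_on_axis.
  - apply (RU_axis_opp a b Ha Hb Hab c); auto using proj_on_axis, RU_proj.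
  - apply (RU_axis_opp b a Hb Ha (not_eq_sym Hab) c); auto using proj_on_axis, RU_proj.
Qed.

(* Multiplication by [l] is a similarity turning every direction by the same angle. *)
Lemma RU_scale k l x : squares U k -> on_axis k l -> RU U l -> RU U x -> RU U (l * x).
Proof.
  intros Hk Hkl Hl Hx.
  induction Hx as [| | p q u v z _ IHp _ IHq Hu Hv Huv Hzp Hzq].
  - replace (l * C0) with C0 by ring; apply RU_0.
  - replace (l * C1) with l by ring; exact Hl.
  - apply distinct_angles_sq in Huv.
    apply on_line_iff in Hzp, Hzq; auto using U_on_T.
    apply (RU_meet (k * (u * u)) (k * (v * v)) (l * p) (l * q)); auto.
    + apply squaresM; [exact Hk | now exists u].
    + apply squaresM; [exact Hk | now exists v].
    + intro E; apply Huv; replace (u * u) with (k * (u * u) / k) by cx_field.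
      rewrite E; cx_field.
    + on_axis_as (l * (z - p)); auto using on_axisM.
    + on_axis_as (l * (z - q)); auto using on_axisM.
Qed.

Lemma RU_generator g : generator U g -> RU U g.
Proof.
  intro Hg; destruct (generator_squares _ Hg) as (a & b & Ha & Hb & Hb1 & ->).
  apply (RU_meet a (a / b) C1 C0); auto using RU_0, RU_1.
  - unfold Cdiv; auto.
  - intro E; apply Hb1; replace b with (a / (a / b)) by cx_field; rewrite <- E; cx_field.
  - unfold on_axis; autorewrite with cconj; rewrite !squares_conj by auto; cx_field.
  - unfold on_axis; autorewrite with cconj; rewrite !squares_conj by auto; cx_field.
Qed.

Lemma RU_mul_gen_prod p x : gen_prod U p -> RU U x -> RU U (x * p).
Proof.
  intro Hp; revert x; induction Hp as [|p g _ IH Hg]; intros x Hx.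
  - replace (x * C1) with x by ring; exact Hx.
  - destruct (generator_on_axis _ Hg) as (k & Hk & Hkg).
    replace (x * (p * g)) with (g * (x * p)) by ring.
    apply (RU_scale k); auto using RU_generator.
Qed.

Hypothesis HU3 : at_least_three_angles U.

Lemma three_squares : exists a b c, squares U a /\ squares U b /\ squares U c /\
  a <> b /\ a <> c /\ b <> c.
Proof.
  destruct HU3 as (u1 & u2 & u3 & H1 & H2 & H3 & D12 & D13 & D23).
  apply distinct_angles_sq in D12, D13, D23.
  exists (u1 * u1), (u2 * u2), (u3 * u3); repeat split; auto;
    [exists u1 | exists u2 | exists u3]; auto.
Qed.

Lemma RU_add x y : RU U x -> RU U y -> RU U (x + y).
Proof.
  destruct three_squares as (a & b & c & Ha & Hb & Hc & Hab & Hac & Hbc).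
  exact (RU_add_of_squares a b c x y Ha Hb Hc Hab Hac Hbc).
Qed.

Lemma RU_opp x : RU U x -> RU U (- x).
Proof.
  destruct three_squares as (a & b & c & Ha & Hb & Hc & Hab & Hac & Hbc).
  exact (RU_opp_of_squares a b c x Ha Hb Hc Hab Hac Hbc).
Qed.

Lemma Zspan_prod_RU z : Zspan_prod U z -> RU U z.
Proof.
  assert (Hgp : forall p, gen_prod U p -> RU U p).
  { intros p Hp; replace p with (C1 * p) by ring; auto using RU_mul_gen_prod, RU_1. }
  induction 1 as [|x p _ IH Hp|x p _ IH Hp].
  - apply RU_0.
  - auto using RU_add.
  - unfold Csub; auto using RU_add, RU_opp.
Qed.

Lemma Zspan_gen_prod p : gen_prod U p -> Zspan_prod U p.
Proof. intro Hp; replace p with (C0 + p) by ring; apply zs_add; [apply zs_zero | exact Hp]. Qed.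

Lemma Zspan_1 : Zspan_prod U C1.
Proof. apply Zspan_gen_prod, gp_one. Qed.

Lemma Zspan_generator g : generator U g -> Zspan_prod U g.
Proof.
  intro Hg; apply Zspan_gen_prod; replace g with (C1 * g) by ring.
  apply gp_mul; [apply gp_one | exact Hg].
Qed.

Lemma Zspan_add x y : Zspan_prod U x -> Zspan_prod U y -> Zspan_prod U (x + y).
Proof.
  intros Hx Hy; induction Hy as [|y p _ IH Hp|y p _ IH Hp].
  - replace (x + C0) with x by ring; exact Hx.
  - replace (x + (y + p)) with ((x + y) + p) by ring; apply zs_add; auto.
  - replace (x + (y - p)) with ((x + y) - p) by ring; apply zs_sub; auto.
Qed.

Lemma Zspan_opp x : Zspan_prod U x -> Zspan_prod U (- x).
Proof.
  induction 1 as [|x p _ IH Hp|x p _ IH Hp].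
  - replace (- C0) with C0 by ring; apply zs_zero.
  - replace (- (x + p)) with (- x - p) by ring; apply zs_sub; auto.
  - replace (- (x - p)) with (- x + p) by ring; apply zs_add; auto.
Qed.

Lemma Zspan_sub x y : Zspan_prod U x -> Zspan_prod U y -> Zspan_prod U (x - y).
Proof. intros; unfold Csub; auto using Zspan_add, Zspan_opp. Qed.

Lemma gen_prod_mul p q : gen_prod U p -> gen_prod U q -> gen_prod U (p * q).
Proof.
  intros Hp Hq; induction Hq as [|q g _ IH Hg].
  - replace (p * C1) with p by ring; exact Hp.
  - replace (p * (q * g)) with ((p * q) * g) by ring; apply gp_mul; auto.
Qed.

Lemma Zspan_mul_gen_prod x p : Zspan_prod U x -> gen_prod U p -> Zspan_prod U (x * p).
Proof.
  intros Hx Hp; induction Hx as [|x q _ IH Hq|x q _ IH Hq].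
  - replace (C0 * p) with C0 by ring; apply zs_zero.
  - replace ((x + q) * p) with (x * p + q * p) by ring; apply zs_add; auto using gen_prod_mul.
  - replace ((x - q) * p) with (x * p - q * p) by ring; apply zs_sub; auto using gen_prod_mul.
Qed.

Lemma Zspan_mul x y : Zspan_prod U x -> Zspan_prod U y -> Zspan_prod U (x * y).
Proof.
  intros Hx Hy; induction Hy as [|y p _ IH Hp|y p _ IH Hp].
  - replace (x * C0) with C0 by ring; apply zs_zero.
  - replace (x * (y + p)) with (x * y + x * p) by ring;
      auto using Zspan_add, Zspan_mul_gen_prod.
  - replace (x * (y - p)) with (x * y - x * p) by ring;
      auto using Zspan_sub, Zspan_mul_gen_prod.
Qed.

(* [a = (1 + a) - 1] with [1 + a = (1 - a^2) / (1 - a)]. *)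
Lemma Zspan_squares a : squares U a -> Zspan_prod U a.
Proof.
  intro Ha; destruct (classic (a = C1)) as [-> | Ha1]; [exact Zspan_1|].
  replace a with ((C1 - a * a) / (C1 - a) - C1) by cx_field.
  auto using Zspan_sub, Zspan_1, Zspan_generator, generator_of_squares.
Qed.

Lemma Zspan_quot_squares a c d : squares U a -> squares U c -> squares U d -> c <> d ->
  Zspan_prod U ((C1 - a) / (c - d)).
Proof.
  intros Ha Hc Hd Hcd.
  assert (Hdc : d / c <> C1).
  { intro E; apply Hcd; replace d with (d / c * c) by cx_field; rewrite E; ring. }
  replace ((C1 - a) / (c - d)) with (/ c * ((C1 - a) / (C1 - d / c))) by cx_field.
  apply Zspan_mul; [apply Zspan_squares; auto|].
  apply Zspan_generator, generator_of_squares; unfold Cdiv; auto.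
Qed.

Lemma gen_prod_on_axis p : gen_prod U p -> exists k, squares U k /\ on_axis k p.
Proof.
  induction 1 as [|p g _ [k [Hk Hkp]] Hg].
  - exists C1; split; [exact squares1 | unfold on_axis; autorewrite with cconj; ring].
  - destruct (generator_on_axis _ Hg) as (k' & Hk' & Hk'g).
    exists (k * k'); auto using on_axisM.
Qed.

Lemma Zspan_axis_quot w a c d : Zspan_prod U w ->
  squares U a -> squares U c -> squares U d -> c <> d ->
  Zspan_prod U ((w - a * w^*) / (c - d)).
Proof.
  intros Hw Ha Hc Hd Hcd.
  assert (Hgp : forall p, gen_prod U p -> Zspan_prod U ((p - a * p^*) / (c - d))).
  { intros p Hp; destruct (gen_prod_on_axis _ Hp) as (k & Hk & Hkp).
    rewrite (on_axis_conj _ _ (squares_neq0 _ Hk) Hkp).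
    replace ((p - a * (p / k)) / (c - d)) with (p * ((C1 - a / k) / (c - d))) by cx_field.
    apply Zspan_mul; [apply Zspan_gen_prod; exact Hp|].
    apply Zspan_quot_squares; unfold Cdiv; auto. }
  induction Hw as [|x p _ IH Hp|x p _ IH Hp].
  - replace ((C0 - a * C0^*) / (c - d)) with C0 by (autorewrite with cconj; cx_field).
    apply zs_zero.
  - replace ((x + p - a * (x + p)^*) / (c - d))
      with ((x - a * x^*) / (c - d) + (p - a * p^*) / (c - d))
      by (autorewrite with cconj; cx_field).
    auto using Zspan_add.
  - replace ((x - p - a * (x - p)^*) / (c - d))
      with ((x - a * x^*) / (c - d) - (p - a * p^*) / (c - d))
      by (autorewrite with cconj; cx_field).
    auto using Zspan_sub.
Qed.

Lemma meet_formula a b p q z : a <> b -> on_axis a (z - p) -> on_axis b (z - q) ->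
  z = p + a * (((p - q) - b * (p - q)^*) / (b - a)).
Proof.
  unfold on_axis; intros Hab Hzp Hzq.
  assert (E : (b - a) * (z - p) = a * ((p - q) - b * (p - q)^*)).
  { transitivity (b * (z - p) - a * (z - q) + a * (p - q)); [ring|].
    rewrite Hzp at 1; rewrite Hzq at 1; autorewrite with cconj; ring. }
  transitivity (p + (b - a) * (z - p) / (b - a)); [cx_field|].
  rewrite E; cx_field.
Qed.

Lemma RU_Zspan_prod z : RU U z -> Zspan_prod U z.
Proof.
  induction 1 as [| | p q u v z _ IHp _ IHq Hu Hv Huv Hzp Hzq].
  - apply zs_zero.
  - exact Zspan_1.
  - apply distinct_angles_sq in Huv.
    apply on_line_iff in Hzp, Hzq; auto using U_on_T.
    rewrite (meet_formula _ _ _ _ _ Huv Hzp Hzq).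
    assert (Hu2 : squares U (u * u)) by (exists u; auto).
    assert (Hv2 : squares U (v * v)) by (exists v; auto).
    auto using Zspan_add, Zspan_mul, Zspan_squares, Zspan_axis_quot, Zspan_sub.
Qed.

End Angles.

Theorem theorem1 (U : Cx -> Prop) :
  angle_subgroup U -> at_least_three_angles U ->
  (RU U C0 /\ RU U C1 /\
   (forall x y, RU U x -> RU U y -> RU U (Cadd x y)) /\
   (forall x, RU U x -> RU U (Copp x)) /\
   (forall x y, RU U x -> RU U y -> RU U (Cmul x y))) /\
  (forall z, RU U z <-> Zspan_prod U z).
Proof.
  intros HU HU3.
  assert (E : forall z, RU U z <-> Zspan_prod U z).
  { intro z; split; [apply RU_Zspan_prod | apply Zspan_prod_RU]; assumption. }
  split; [repeat split | exact E].
  - apply RU_0.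
  - apply RU_1.
  - intros x y Hx Hy; apply E, Zspan_add; apply E; assumption.
  - intros x Hx; apply E, Zspan_opp, E; assumption.
  - intros x y Hx Hy; apply E, Zspan_mul; apply E; assumption.
Qed.
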